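(* For every set $X=\{X^1,\dots,X^m\}\subseteq S_n$ of $m\ge1$ distinct elements, $$|\mathrm{Elim}(X)|=\sum_{k=1}^m\ \sum_{1\le i_1<\cdots<i_k\le m}3^{z_{X(i_1,\dots,i_k)}}\Big(-2^{k-1}+\sum_{\alpha\in S_k}(-1)^{z(\alpha)+k+1}\,2^{\,z(\alpha)+|\mathrm{BSp}(X(i_1,\dots,i_k),\alpha)|}\Big),$$ where $X(i_1,\dots,i_k)=\{X^{i_1},\dots,X^{i_k}\}$.
   Context: $S_n$ is the set of all nonzero $n$-tuples in $\{-1,0,1\}^n$ whose first nonzero entry equals $1$. A tuple $t=(t_1,\dots,t_n)\in\{1,0,-1,u\}^n$ ($u$ a formal symbol) eliminates $s\in S_n$ if: (i) $t_i\neq0$ and $s_i\neq0$ for some $i$; (ii) there is $k\in\{+1,-1\}$ with $t_i=ks_i$ for all $i$ with $s_i\neq0$ and $t_i\neq0$; (iii) $s_i=0$ whenever $t_i=u$. For $X\subseteq S_n$, $\mathrm{Elim}(X)$ is the set of elements of $S_n$ eliminated by at least one element of $X$. For $Y=\{Y^1,\dots,Y^k\}\subseteq S_n$, $M_Y$ is the $k\times n$ matrix whose $i$-th row is $Y^i$ and $z_Y$ is the number of zero columns of $M_Y$. For a tuple $\alpha$, $z(\alpha)$ is the number of its zero coordinates. For $\alpha\in S_k$, $\mathrm{BSp}(Y,\alpha)$ is the set of indices $c\in\{1,\dots,n\}$ such that the $c$-th column of $M_Y$ is nonzero and equals $\pm(a_1\alpha_1,\dots,a_k\alpha_k)^T$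 for some $(a_1,\dots,a_k)\in\{0,1\}^k\setminus\{(0,\dots,0)\}$. *)

From HB Require Import structures.
From mathcomp Require Import all_boot all_order all_algebra.
Set Implicit Arguments. Unset Strict Implicit. Unset Printing Implicit Defensive.
Import Order.TTheory GRing.Theory Num.Theory.
Local Open Scope ring_scope.

(* Entries in {-1,0,1} are encoded by 'I_3, with value (i : 'I_3) - 1. *)
Definition trit := 'I_3.
Definition tv (x : trit) : int := (nat_of_ord x)%:Z - 1.

Definition vec (n : nat) := {ffun 'I_n -> trit}.

Definition inS (n : nat) (s : vec n) : bool :=
  [exists i : 'I_n, (tv (s i) == 1) &&
     [forall j : 'I_n, ((j < i)%N) ==> (tv (s j) == 0)]].

Definition Sset (n : nat) : {set vec n} := [set s : vec n | inS s].

(* Eliminating tuples: entries in {1,0,-1,u}; [None] stands for u. *)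
Definition etuple (n : nat) := {ffun 'I_n -> option trit}.

Definition enz (e : option trit) : bool :=
  match e with None => true | Some x => tv x != 0 end.

Definition eqk (k : int) (e : option trit) (v : int) : bool :=
  match e with None => false | Some x => tv x == k * v end.

Definition eliminates (n : nat) (t : etuple n) (s : vec n) : bool :=
  [&& [exists i : 'I_n, enz (t i) && (tv (s i) != 0)],
      [exists k : bool,
         [forall i : 'I_n, (enz (t i) && (tv (s i) != 0)) ==>
            eqk (if k then 1 else -1) (t i) (tv (s i))]] &
      [forall i : 'I_n, (t i == None) ==> (tv (s i) == 0)]].

Definition embed (n : nat) (x : vec n) : etuple n := [ffun i => Some (x i)].

Definition Elim (n : nat) (X : {set vec n}) : {set vec n} :=
  [set s in Sset n | [exists x in X, eliminates (embed x) s]].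

(* Y given by its rows Y^1..Y^k (the matrix M_Y) *)
Definition zY (n k : nat) (Y : 'I_k -> vec n) : nat :=
  #|[set c : 'I_n | [forall j : 'I_k, tv (Y j c) == 0]]|.

Definition zt (k : nat) (a : vec k) : nat := #|[set j : 'I_k | tv (a j) == 0]|.

Definition BSp (n k : nat) (Y : 'I_k -> vec n) (a : vec k) : {set 'I_n} :=
  [set c : 'I_n | ~~ [forall j : 'I_k, tv (Y j c) == 0] &&
     [exists b : {ffun 'I_k -> bool}, [exists j, b j] &&
        ([forall j : 'I_k, tv (Y j c) == (if b j then tv (a j) else 0)] ||
         [forall j : 'I_k, tv (Y j c) == - (if b j then tv (a j) else 0)])]].

Definition vec0 (n : nat) : vec n := [ffun => ord0].

(* X(i_1,...,i_k) for I = {i_1 < ... < i_k} (0-based indices into Xs) *)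
Definition rowsOf (n : nat) (Xs : seq (vec n)) (I : {set 'I_(size Xs)}) (k : nat)
  : 'I_k -> vec n :=
  fun j => nth (vec0 n) Xs (nth 0%N (map (@nat_of_ord _) (enum I)) j).

Definition term (n k : nat) (Y : 'I_k -> vec n) : int :=
  (3%:Z) ^+ zY Y *
  (- (2%:Z) ^+ k.-1 +
   \sum_(a in Sset k) (-1) ^+ (zt a + k + 1) * (2%:Z) ^+ (zt a + #|BSp Y a|)).

From HB Require Import structures.
From mathcomp Require Import all_boot all_order all_algebra.
From mathcomp Require Import ring.
Set Implicit Arguments. Unset Strict Implicit. Unset Printing Implicit Defensive.
Import Order.TTheory GRing.Theory Num.Theory.
Local Open Scope ring_scope.

(* Inclusion-exclusion over the rows of X writes |Elim(X)| as an alternating sum, over the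
   nonempty subfamilies Y, of the number of s in S_n eliminated by every row of Y.  The
   indicator that y eliminates s equals [c_1] + [c_(-1)] - 2 [c_0], where [c_v] says that y
   agrees with v s on their common support, so the product over the k rows of Y expands into
   a sum over a in {-1,0,1}^k weighted by (-2)^(z(a)).  For fixed a, the number of s in
   {-1,0,1}^n compatible with all rows factorizes over the columns of M_Y: a zero column
   contributes 3, a column in BSp(Y,a) contributes 2, any other column 1.  Both the sum over
   s and the one over a are invariant under negation, which halves them to sums over S_n and
   S_k and produces the two correction terms of the formula. *)

Lemma prod_indicator (I : finType) (b : I -> bool) :
  \prod_(i : I) ((b i)%:R : int) = ([forall i, b i])%:R.
Proof.
case: (boolP [forall i, b i]) => [/forallP b_all|/forallPn [i /negbTE bi]].
  by rewrite big1 // => i _; rewrite b_all.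
by rewrite (bigD1 i) //= bi mul0r.
Qed.

Lemma prodr_if_card (I : finType) (P : pred I) (x : int) :
  \prod_(i : I) (if P i then x else 1) = x ^+ #|P|.
Proof. by rewrite -big_mkcond prodr_const. Qed.

Lemma prod_1subr (R : comPzRingType) (I : finType) (F : I -> R) :
  \prod_(i : I) (1 - F i) = \sum_(J : {set I}) (-1) ^+ #|J| * \prod_(i in J) F i.
Proof.
under eq_bigr => i _ do rewrite addrC.
by rewrite bigA_distr; apply: eq_bigr => J _; rewrite -big_mkcond prodrN.
Qed.

Lemma inclusion_exclusion (I T : finType) (A : {pred T}) (f : I -> T -> bool) :
  (#|[set s in A | [exists i, f i s]]|%:Z : int) =
  \sum_(J : {set I} | J != set0) (-1) ^+ #|J|.+1 * \sum_(s in A) \prod_(i in J) ((f i s)%:R : int).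
Proof.
rewrite -natz -sumr_const (eq_bigl (fun s => (s \in A) && [exists i, f i s])) => [|s];
  last by rewrite inE.
rewrite big_mkcondr /=; under [RHS]eq_bigr => J _ do rewrite big_distrr.
rewrite exchange_big /=; apply: eq_bigr => s _.
have := prod_1subr (fun i => ((f i s)%:R : int)).
rewrite (bigD1 set0) //= cards0 big_set0 mulr1 => prodE.
have -> : \sum_(J | J != set0) (-1) ^+ #|J|.+1 * \prod_(i in J) ((f i s)%:R : int) =
    1 - \prod_i (1 - (f i s)%:R).
  rewrite prodE opprD addrA subrr add0r -sumrN.
  by apply: eq_bigr => J _; rewrite exprS mulN1r mulNr.
rewrite (eq_bigr (fun i => (~~ f i s)%:R)) => [|i _]; last by case: (f i s).
by rewrite prod_indicator -negb_exists; case: existsP.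
Qed.

Lemma sum_nonempty_by_card (R : zmodType) (T : finType) (F : {set T} -> R) :
  \sum_(J : {set T} | J != set0) F J =
  \sum_(1 <= k < #|T|.+1) \sum_(J : {set T} | #|J| == k) F J.
Proof.
have card_lt (J : {set T}) : (#|J| < #|T|.+1)%N by rewrite ltnS max_card.
have : \sum_(J : {set T}) F J = \sum_(k < #|T|.+1) \sum_(J : {set T} | #|J| == k) F J.
  by rewrite (partition_big (fun J => Ordinal (card_lt J)) xpredT).
rewrite (bigD1 set0) //= big_ord_recl /=.
have -> : \sum_(J : {set T} | #|J| == 0%N) F J = F set0.
  by rewrite (eq_bigl (pred1 set0)) ?big_pred1_eq // => J; rewrite cards_eq0.
by move=> /addrI ->; rewrite big_add1 /= big_mkord.
Qed.

Definition trit0 : trit := Ordinal (isT : (1 < 3)%N).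
Definition tritN (x : trit) : trit := rev_ord x.
Definition zerov (n : nat) : vec n := [ffun => trit0].
Definition vecN (n : nat) (s : vec n) : vec n := [ffun i => tritN (s i)].

Lemma tv_tritN x : tv (tritN x) = - tv x.
Proof. by case: x => [[|[|[|]]] //]. Qed.

Lemma tv_eq0 x : (tv x == 0) = (x == trit0).
Proof. by case: x => [[|[|[|]]] //]. Qed.

Lemma sum_trit (R : nmodType) (F : int -> R) :
  \sum_(x : trit) F (tv x) = F (-1) + F 0 + F 1.
Proof. by rewrite !big_ord_recr big_ord0 /= add0r. Qed.

Lemma vecNE n (s : vec n) i : vecN s i = tritN (s i).
Proof. by rewrite ffunE. Qed.

Lemma vecNK n : involutive (@vecN n).
Proof. by move=> s; apply/ffunP => i; rewrite !vecNE /tritN rev_ordK. Qed.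

Lemma vecN_inj n : injective (@vecN n).
Proof. exact: inv_inj (@vecNK n). Qed.

Lemma vecN_zerov n : vecN (zerov n) = zerov n.
Proof. by apply/ffunP => i; rewrite vecNE ffunE; apply/val_inj. Qed.

Lemma vecN_eq0 n (s : vec n) : (vecN s == zerov n) = (s == zerov n).
Proof. by rewrite -{1}(vecN_zerov n) (inj_eq (@vecN_inj n)). Qed.

Lemma inS_zerov n : inS (zerov n) = false.
Proof. by apply/existsP => -[i /andP[]]; rewrite ffunE. Qed.

Lemma inS_first n (s : vec n) (i : 'I_n) :
  (forall j : 'I_n, (j < i)%N -> tv (s j) = 0) -> tv (s i) != 0 ->
  inS s = (tv (s i) == 1).
Proof.
move=> s_lt_i si_nz; apply/existsP/idP => [[i' /andP[/eqP si' /forallP s_lt_i']]|si1].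
  case: (ltngtP i' i) => [lt|gt|/val_inj <-].
  - by move: (s_lt_i _ lt); rewrite si'.
  - by move: (s_lt_i' i); rewrite gt /= (negbTE si_nz).
  - by rewrite si'.
by exists i; rewrite si1; apply/forallP => j; apply/implyP => /s_lt_i ->.
Qed.

Lemma inS_vecN n (s : vec n) : inS (vecN s) = (s != zerov n) && ~~ inS s.
Proof.
have [->|s_nz] := eqVneq s (zerov n); first by rewrite vecN_zerov inS_zerov.
have [i0 si0] : exists i : 'I_n, tv (s i) != 0.
  apply/existsP; apply: contraNT s_nz => /existsPn s0; apply/eqP/ffunP => i.
  by move: (s0 i); rewrite negbK ffunE tv_eq0 => /eqP.
case: (@arg_minnP _ i0 (fun i : 'I_n => tv (s i) != 0) val si0) => i si_nz i_min.
have s_lt_i (j : 'I_n) : (j < i)%N -> tv (s j) = 0.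
  by move=> lt; apply/eqP; apply: contraTT lt => /i_min; rewrite -leqNgt.
rewrite (inS_first s_lt_i si_nz) (@inS_first _ (vecN s) i).
- by rewrite vecNE tv_tritN; move: si_nz; case: (s i) => [[|[|[|]]] //].
- by move=> j /s_lt_i; rewrite vecNE tv_tritN => ->; rewrite oppr0.
- by rewrite vecNE tv_tritN oppr_eq0.
Qed.

(* [s -> -s] exchanges [S_n] with the nonzero vectors outside it. *)
Lemma sum_vecN_invariant (R : nmodType) n (F : vec n -> R) :
  (forall s, F (vecN s) = F s) ->
  \sum_(s : vec n) F s = F (zerov n) + (\sum_(s in Sset n) F s) *+ 2.
Proof.
move=> FN; rewrite (bigID (mem (Sset n))) /= addrC.
rewrite (bigD1 (zerov n)) /=; last by rewrite inE inS_zerov.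
rewrite -addrA mulr2n; congr (_ + (_ + _)).
rewrite (reindex_inj (@vecN_inj n)) /=; apply: eq_big => s; last by rewrite FN.
rewrite !inE inS_vecN vecN_eq0.
by have [->|] := eqVneq s (zerov n); rewrite ?inS_zerov //= negbK andbT.
Qed.

(* Condition (ii) of elimination at one coordinate, with factor [v]. *)
Definition agree (u w v : int) : bool := (u != 0) && (w != 0) ==> (u == v * w).

Definition compatible n (y s : vec n) (v : int) : bool :=
  [forall i, agree (tv (y i)) (tv (s i)) v].

Definition overlap n (y s : vec n) : bool :=
  [exists i, (tv (y i) != 0) && (tv (s i) != 0)].

Definition elim_ind n (y s : vec n) : int := (eliminates (embed y) s)%:R.

Lemma compatible0 n (y s : vec n) : compatible y s 0 = ~~ overlap y s.
Proof.
rewrite /compatible /overlap negb_exists; apply: eq_forallb => i.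
by rewrite /agree mul0r; case: eqP.
Qed.

Lemma compatible_sign_overlap n (y s : vec n) :
  compatible y s 1 && compatible y s (-1) = ~~ overlap y s.
Proof.
have agree_sign i : agree (tv (y i)) (tv (s i)) 1 && agree (tv (y i)) (tv (s i)) (-1)
    = ~~ ((tv (y i) != 0) && (tv (s i) != 0)).
  rewrite /agree mul1r mulN1r; case: eqP => //= _; case: eqP => //= /eqP si_nz.
  by apply/andP => -[/eqP-> /eqP /esym/eqP]; rewrite eqNr (negbTE si_nz).
rewrite /overlap negb_exists; apply/andP/forallP => [[/forallP c1 /forallP cN] i|H].
  by rewrite -agree_sign c1 cN.
by split; apply/forallP => i; have := H i; rewrite -agree_sign => /andP[].
Qed.

Lemma eliminates_embed n (y s : vec n) :
  eliminates (embed y) s = overlap y s && (compatible y s 1 || compatible y s (-1)).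
Proof.
rewrite /eliminates.
have -> : [forall i, (embed y i == None) ==> (tv (s i) == 0)].
  by apply/forallP => i; rewrite ffunE.
have -> : [exists i, enz (embed y i) && (tv (s i) != 0)] = overlap y s.
  by apply: eq_existsb => i; rewrite ffunE.
have compatE (k : int) : [forall i, enz (embed y i) && (tv (s i) != 0) ==>
    eqk k (embed y i) (tv (s i))] = compatible y s k.
  by apply: eq_forallb => i; rewrite ffunE.
rewrite andbT; congr (_ && _).
apply/existsP/orP => [[[] H]|[H|H]].
- by left; rewrite -compatE.
- by right; rewrite -compatE.
- by exists true; rewrite compatE.
- by exists false; rewrite compatE.
Qed.

Definition trit_weight (v : int) : int := if v == 0 then -2 else 1.

Lemma elim_ind_compatible n (y s : vec n) :
  elim_ind y s = \sum_(a : trit) trit_weight (tv a) * (compatible y s (tv a))%:R.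
Proof.
rewrite (sum_trit (fun v => trit_weight v * (compatible y s v)%:R)) /trit_weight /=.
rewrite /elim_ind eliminates_embed compatible0.
have := compatible_sign_overlap y s.
by case: overlap; case: compatible; case: compatible => //= _; rewrite ?mulr1 ?mulr0.
Qed.

Lemma elim_ind_vecN n (y s : vec n) : elim_ind y (vecN s) = elim_ind y s.
Proof.
have compatN v : compatible y (vecN s) v = compatible y s (- v).
  by apply: eq_forallb => i; rewrite vecNE tv_tritN /agree oppr_eq0 mulrN mulNr.
have overlapN : overlap y (vecN s) = overlap y s.
  by apply: eq_existsb => i; rewrite vecNE tv_tritN oppr_eq0.
by rewrite /elim_ind !eliminates_embed overlapN !compatN opprK orbC.
Qed.

Lemma elim_ind_zerov n (y : vec n) : elim_ind y (zerov n) = 0.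
Proof.
rewrite /elim_ind eliminates_embed (_ : overlap y (zerov n) = false) //.
by apply/existsPn => i; rewrite ffunE andbF.
Qed.

Section Columns.

Variables (n k : nat) (Y : 'I_k -> vec n) (a : vec k).

Definition zero_col (c : 'I_n) : bool := [forall j, tv (Y j c) == 0].

Definition col_agree (c : 'I_n) (v : int) : bool :=
  [forall j, agree (tv (Y j c)) v (tv (a j))].

Lemma prod_compatible_cols (s : vec n) :
  \prod_(j < k) ((compatible (Y j) s (tv (a j)))%:R : int) =
  \prod_(c : 'I_n) ((col_agree c (tv (s c)))%:R : int).
Proof.
rewrite !prod_indicator /compatible /col_agree; congr (nat_of_bool _)%:R.
by apply/forallP/forallP => H x; apply/forallP => y; apply: (forallP (H y)).
Qed.

Lemma BSp_col_agree c :
  (c \in BSp Y a) = ~~ zero_col c && (col_agree c 1 || col_agree c (-1)).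
Proof.
rewrite inE -/(zero_col c); case: (boolP (zero_col c)) => //= /forallPn [j0 Yj0_nz].
apply/existsP/orP => [[b /andP[_ /orP[] /forallP Yb]]|agree1N].
- left; apply/forallP => j; rewrite /agree mulr1.
  by move: (Yb j); case: (b j) => /eqP->; rewrite ?eqxx ?implybT.
- right; apply/forallP => j; rewrite /agree mulrN1.
  by move: (Yb j); case: (b j) => /eqP->; rewrite ?oppr0 ?eqxx ?implybT.
exists [ffun j => tv (Y j c) != 0]; apply/andP; split.
  by apply/existsP; exists j0; rewrite ffunE.
apply/orP; case: agree1N => /forallP Yagree; [left|right]; apply/forallP => j;
  move: (Yagree j); rewrite ffunE /agree ?mulr1 ?mulrN1 ?oppr_eq0 oner_eq0;
  by have [->|Yjc_nz] := eqVneq (tv (Y j c)) 0; rewrite ?eqxx ?oppr0 // Yjc_nz.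
Qed.

Lemma sum_col_agree c :
  \sum_(x : trit) ((col_agree c (tv x))%:R : int) =
  (if zero_col c then 3 else 1) * (if c \in BSp Y a then 2 else 1).
Proof.
rewrite (sum_trit (fun v => (col_agree c v)%:R)) BSp_col_agree.
have agree0 v : zero_col c -> col_agree c v.
  by move=> /forallP Y0; apply/forallP => j; rewrite /agree Y0.
have -> : col_agree c 0 by apply/forallP => j; rewrite /agree eqxx andbF.
case: (boolP (zero_col c)) => [Y0|/forallPn [j0 Yj0_nz]] /=.
  by rewrite !agree0.
have : ~~ (col_agree c 1 && col_agree c (-1)).
  apply/andP => -[/forallP /(_ j0) + /forallP /(_ j0)].
  rewrite /agree Yj0_nz oner_eq0 oppr_eq0 oner_eq0 mulr1 mulrN1 /= => /eqP Ya.
  by rewrite Ya eq_sym eqNr -Ya (negbTE Yj0_nz).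
by case: col_agree; case: col_agree.
Qed.

Lemma sum_prod_compatible :
  \sum_(s : vec n) \prod_(j < k) ((compatible (Y j) s (tv (a j)))%:R : int) =
  3 ^+ zY Y * 2 ^+ #|BSp Y a|.
Proof.
under eq_bigr => s _ do rewrite prod_compatible_cols.
rewrite -(bigA_distr_bigA (fun c x => ((col_agree c (tv x))%:R : int))) /=.
under eq_bigr => c _ do rewrite sum_col_agree.
rewrite big_split /= !prodr_if_card; congr (_ ^+ _ * _).
by apply: eq_card => c; rewrite inE.
Qed.

End Columns.

Section Rows.

Variables (n k : nat) (Y : 'I_k -> vec n).

Lemma prod_elim_ind (s : vec n) :
  \prod_(j < k) elim_ind (Y j) s =
  \sum_(a : vec k) (-2) ^+ zt a * \prod_(j < k) ((compatible (Y j) s (tv (a j)))%:R : int).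
Proof.
under eq_bigr => j _ do rewrite elim_ind_compatible.
rewrite (bigA_distr_bigA (fun j x => trit_weight (tv x) * (compatible (Y j) s (tv x))%:R)).
apply: eq_bigr => a _; rewrite big_split /=; congr (_ * _).
rewrite /trit_weight prodr_if_card; congr (_ ^+ _).
by apply: eq_card => j; rewrite inE.
Qed.

Lemma sum_prod_elim_ind :
  \sum_(s : vec n) \prod_(j < k) elim_ind (Y j) s =
  \sum_(a : vec k) (-2) ^+ zt a * (3 ^+ zY Y * 2 ^+ #|BSp Y a|).
Proof.
under eq_bigr => s _ do rewrite prod_elim_ind.
rewrite exchange_big /=; apply: eq_bigr => a _.
by rewrite -big_distrr /= sum_prod_compatible.
Qed.

Lemma zt_vecN (a : vec k) : zt (vecN a) = zt a.
Proof. by apply: eq_card => j; rewrite !inE vecNE tv_tritN oppr_eq0. Qed.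

Lemma BSp_vecN (a : vec k) : BSp Y (vecN a) = BSp Y a.
Proof.
apply/setP => c; rewrite !BSp_col_agree; congr (_ && _).
have agreeN v : col_agree Y (vecN a) c v = col_agree Y a c (- v).
  by apply: eq_forallb => j; rewrite vecNE tv_tritN /agree oppr_eq0 mulrN mulNr.
by rewrite !agreeN opprK orbC.
Qed.

Lemma zt_zerov : zt (zerov k) = k.
Proof. by rewrite -[RHS]card_ord; apply: eq_card => j; rewrite !inE ffunE. Qed.

Lemma BSp_zerov : BSp Y (zerov k) = set0.
Proof.
apply/setP => c; rewrite BSp_col_agree inE.
case: (boolP (zero_col Y c)) => //= /forallPn [j Yj_nz].
by apply/negbTE; rewrite negb_or; apply/andP; split; apply/forallPn; exists j;
  rewrite /agree ffunE Yj_nz.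
Qed.

End Rows.

Lemma sum_Sset_prod_elim_ind n k (Y : 'I_k.+1 -> vec n) :
  \sum_(s in Sset n) \prod_(j < k.+1) elim_ind (Y j) s =
  (-1) ^+ k.+1 * 2 ^+ k * 3 ^+ zY Y +
  \sum_(a in Sset k.+1) (-2) ^+ zt a * (3 ^+ zY Y * 2 ^+ #|BSp Y a|).
Proof.
pose H a := (-2) ^+ zt a * (3 ^+ zY Y * 2 ^+ #|BSp Y a| : int).
have := sum_prod_elim_ind Y.
rewrite (sum_vecN_invariant (fun s => eq_bigr _ (fun j _ => elim_ind_vecN (Y j) s))).
rewrite (@sum_vecN_invariant _ _ H) => [|a]; last by rewrite /H zt_vecN BSp_vecN.
rewrite big_ord_recl elim_ind_zerov mul0r add0r /H zt_zerov BSp_zerov cards0 mulr1.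
have -> : (-2 : int) ^+ k.+1 = ((-1) ^+ k.+1 * 2 ^+ k) *+ 2.
  by rewrite -mulN1r exprMn !exprS; ring.
by rewrite mulrnAl -mulrnDl => /(pmulrnI (isT : (0 < 2)%N)).
Qed.

Lemma term_Sset n k (Y : 'I_k.+1 -> vec n) :
  term Y = - (2 ^+ k * 3 ^+ zY Y) +
    (-1) ^+ k * \sum_(a in Sset k.+1) (-2) ^+ zt a * (3 ^+ zY Y * 2 ^+ #|BSp Y a|).
Proof.
rewrite /term -(natz 2) -(natz 3) /= mulrDr mulrN mulrC; congr (_ + _).
rewrite !big_distrr /=; apply: eq_bigr => a _.
have signE : (-1) ^+ (zt a + k.+1 + 1) = (-1) ^+ zt a * (-1) ^+ k :> int.
  by rewrite -addnA addn1 !addnS !exprS mulN1r mulN1r opprK exprD.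
have neg2 : (-2 : int) = -1 * 2 by rewrite mulN1r.
rewrite signE exprD neg2 exprMn.
(* [ring] chokes on the cardinalities in the exponents, so the powers are abstracted first. *)
move: (3 ^+ zY Y) ((-1) ^+ zt a) ((-1) ^+ k) (2 ^+ zt a) (2 ^+ #|BSp Y a|) => ? ? ? ? ?.
ring.
Qed.

Lemma term_sum_prod_elim_ind n k (Y : 'I_k.+1 -> vec n) :
  term Y = (-1) ^+ k * \sum_(s in Sset n) \prod_(j < k.+1) elim_ind (Y j) s.
Proof.
have sign2 : ((-1) ^+ k * (-1) ^+ k : int) = 1 by rewrite -expr2 sqrr_sign.
rewrite term_Sset sum_Sset_prod_elim_ind exprS.
move: sign2 (2 ^+ k) (3 ^+ zY Y) (\sum_(a in _) _).
move: ((-1) ^+ k) => e e2 A B S.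
have -> : e * (-1 * e * A * B + S) = - (e * e) * (A * B) + e * S by ring.
by rewrite e2 mulN1r.
Qed.

Lemma Elim_nth n (Xs : seq (vec n)) :
  Elim [set x in Xs] =
  [set s in Sset n | [exists i : 'I_(size Xs), eliminates (embed (nth (vec0 n) Xs i)) s]].
Proof.
apply/setP => s; rewrite !inE; congr (_ && _).
apply/existsP/existsP => [[x /andP[]]|[i elim_s]].
  by rewrite inE => /(nthP (vec0 n)) [i i_lt <-]; exists (Ordinal i_lt).
by exists (nth (vec0 n) Xs i); rewrite inE mem_nth.
Qed.

Lemma prod_rowsOf n (Xs : seq (vec n)) (I : {set 'I_(size Xs)}) k (F : vec n -> int) :
  #|I| = k -> \prod_(j < k) F (@rowsOf n Xs I k j) = \prod_(i in I) F (nth (vec0 n) Xs i).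
Proof.
move=> cardI; transitivity (\prod_(i <- map val (enum I)) F (nth (vec0 n) Xs i)).
  by rewrite (big_nth 0%N) big_mkord size_map -cardE cardI.
by rewrite big_map big_enum.
Qed.

Theorem mainTheorem13 (n : nat) (Xs : seq (vec n)) :
  (0 < size Xs)%N -> uniq Xs -> all (@inS n) Xs ->
  (#|Elim [set x in Xs]|%:Z : int) =
  \sum_(1 <= k < (size Xs).+1)
     \sum_(I : {set 'I_(size Xs)} | #|I| == k) term (@rowsOf n Xs I k).
Proof.
move=> _ _ _; rewrite Elim_nth inclusion_exclusion sum_nonempty_by_card card_ord.
apply: eq_big_nat => -[|k] // _; apply: eq_bigr => I /eqP cardI.
rewrite term_sum_prod_elim_ind cardI !exprS mulN1r mulN1r opprK; congr (_ * _).
by apply: eq_bigr => s _; rewrite (prod_rowsOf (fun y => elim_ind y s) cardI).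
Qed.
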